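(* Let $n\ge 3$ be an odd integer and $(\mathcal{C},\Sigma)$ an $n$-angulated category. Define a relation on objects of $\mathcal{C}$ by $A\sim B$ iff there exist objects $C_1,\dots,C_n$ and two $n$-angles $A\oplus C_1\xrightarrow{\alpha_1}C_2\xrightarrow{\alpha_2}\cdots\xrightarrow{\alpha_{n-1}}C_n\xrightarrow{\alpha_n}\Sigma A\oplus\Sigma C_1$ and $B\oplus C_1\xrightarrow{\beta_1}C_2\xrightarrow{\beta_2}\cdots\xrightarrow{\beta_{n-1}}C_n\xrightarrow{\beta_n}\Sigma B\oplus\Sigma C_1$ in $\mathcal{C}$. Then: (1) $\sim$ is an equivalence relation. (2) The set $\pi$ of equivalence classes $\{A\}$ is an abelian group under $\{A\}+\{B\}=\{A\oplus B\}$, and the inverse of $\{A\}$ is $\{\Sigma A\}$. (3) The assignment $\{A\}\leftrightarrow[A]$ gives an isomorphism of groups $\pi\cong K_0(\mathcal{C})$.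
   Context: All categories are small. Fix an integer $n\ge 3$. Let $\mathcal{C}$ be an additive category with an automorphism $\Sigma$. An $n$-$\Sigma$-sequence in $\mathcal{C}$ is a diagram $A_1\xrightarrow{\alpha_1}A_2\xrightarrow{\alpha_2}\cdots\xrightarrow{\alpha_{n-1}}A_n\xrightarrow{\alpha_n}\Sigma A_1$. Its left rotation is $A_2\xrightarrow{\alpha_2}\cdots\xrightarrow{\alpha_n}\Sigma A_1\xrightarrow{(-1)^n\Sigma\alpha_1}\Sigma A_2$. A morphism from $(A_\bullet,\alpha)$ to $(B_\bullet,\beta)$ is a tuple $(\varphi_1,\dots,\varphi_n)$, $\varphi_i:A_i\to B_i$, with $\beta_i\varphi_i=\varphi_{i+1}\alpha_i$ for $1\le i\le n-1$ and $\beta_n\varphi_n=(\Sigma\varphi_1)\alpha_n$; it is an isomorphism if all $\varphi_i$ are isomorphisms. Direct sums of sequences are taken termwise. $(\mathcal{C},\Sigma)$ is $n$-angulated if it is equipped with a collection $\mathscr N$ of $n$-$\Sigma$-sequences, called $n$-angles, such that: (N1)(a) $\mathscr N$ is closed under direct sums, direct summands and isomorphisms of $n$-$\Sigma$-sequences; (b) for every object $A$, the trivial sequence $A\xrightarrow{1}A\to0\to\cdots\to0\to\Sigma A$ is in $\mathscr N$; (c) every morphism $A_1\to A_2$ is the first morphism of some $n$-angle; (N2) an $n$-$\Sigma$-sequence is in $\mathscr N$ iff its left rotation is; (N3) given $n$-angles $(A_\bullet,\alpha),(B_\bullet,\beta)$ and $\varphi_1:A_1\to B_1$, $\varphi_2:A_2\to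 B_2$ with $\beta_1\varphi_1=\varphi_2\alpha_1$, there exist $\varphi_3,\dots,\varphi_n$ making $(\varphi_1,\dots,\varphi_n)$ a morphism; (N4) in (N3) the $\varphi_i$ can be chosen so that the mapping cone $A_2\oplus B_1\to A_3\oplus B_2\to\cdots\to\Sigma A_1\oplus B_n\to\Sigma A_2\oplus\Sigma B_1$, with maps $\left[\begin{smallmatrix}-\alpha_{i+1}&0\\ \varphi_{i+1}&\beta_i\end{smallmatrix}\right]$ ($1\le i\le n-1$) and last map $\left[\begin{smallmatrix}-\Sigma\alpha_1&0\\ \Sigma\varphi_1&\beta_n\end{smallmatrix}\right]$, is an $n$-angle. Grothendieck group: let $F(\mathcal{C})$ be the free abelian group on the isomorphism classes $\langle A\rangle$ of objects of $\mathcal{C}$. For an $n$-angle $A_\bullet$ put $\chi(A_\bullet)=\sum_{i=1}^n(-1)^{i+1}\langle A_i\rangle$. Let $R(\mathcal{C})$ be the subgroup generated by all $\chi(A_\bullet)$ ($A_\bullet$ an $n$-angle), together with $\langle 0\rangle$ when $n$ is even. Then $K_0(\mathcal{C})=F(\mathcal{C})/R(\mathcal{C})$, and $[A]$ denotes the class of $\langle A\rangle$. *)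

From HB Require Import structures.
From mathcomp Require Import all_boot all_algebra.
From mathcomp Require Import boolp.
Set Implicit Arguments. Unset Strict Implicit. Unset Printing Implicit Defensive.
Import GRing.Theory.

Record catData := CatData {
  Obj : Type;
  Hom : Obj -> Obj -> zmodType;
  idm : forall A, Hom A A;
  comp : forall A B D, Hom B D -> Hom A B -> Hom A D;
  zobj : Obj;
  bip : Obj -> Obj -> Obj;
  bin1 : forall A B, Hom A (bip A B);
  bin2 : forall A B, Hom B (bip A B);
  bpr1 : forall A B, Hom (bip A B) A;
  bpr2 : forall A B, Hom (bip A B) B }.

Arguments idm {c} A.
Arguments comp {c A B D}.
Arguments zobj {c}.
Arguments bip {c}.
Arguments bin1 {c} A B.
Arguments bin2 {c} A B.
Arguments bpr1 {c} A B.
Arguments bpr2 {c} A B.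

Definition additive_axioms (C : catData) : Prop :=
  [/\ (forall (A B D E : Obj C) (h : Hom D E) (g : Hom B D) (f : Hom A B),
          comp h (comp g f) = comp (comp h g) f),
      (forall (A B : Obj C) (f : Hom A B), comp (idm B) f = f /\ comp f (idm A) = f),
      (forall (A B D : Obj C) (g1 g2 : Hom B D) (f : Hom A B),
          comp (g1 + g2)%R f = (comp g1 f + comp g2 f)%R),
      (forall (A B D : Obj C) (g : Hom B D) (f1 f2 : Hom A B),
          comp g (f1 + f2)%R = (comp g f1 + comp g f2)%R)
    & (forall A : Obj C, (forall f : Hom zobj A, f = 0%R) /\ (forall f : Hom A zobj, f = 0%R))] /\
    (forall A B : Obj C,
         [/\ comp (bpr1 A B) (bin1 A B) = idm A, comp (bpr2 A B) (bin2 A B) = idm B,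
             comp (bpr1 A B) (bin2 A B) = 0%R, comp (bpr2 A B) (bin1 A B) = 0%R
           & (comp (bin1 A B) (bpr1 A B) + comp (bin2 A B) (bpr2 A B))%R = idm (bip A B)]).

Record addCat := AddCat { cdata :> catData; cax : additive_axioms cdata }.

Definition isIso (C : catData) (A B : Obj C) (f : Hom A B) : Prop :=
  exists g : Hom B A, comp g f = idm A /\ comp f g = idm B.

Definition iso (C : catData) (A B : Obj C) : Prop := exists f : Hom A B, isIso f.

Record autData (C : catData) := AutData {
  SO : Obj C -> Obj C;
  SH : forall A B : Obj C, Hom A B -> Hom (SO A) (SO B) }.
Arguments SO {C} _ _.
Arguments SH {C} _ {A B}.

Definition is_auto (C : catData) (S : autData C) : Prop :=
  [/\ (forall A : Obj C, SH S (idm A) = idm (SO S A)),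
      (forall (A B D : Obj C) (g : Hom B D) (f : Hom A B),
          SH S (comp g f) = comp (SH S g) (SH S f)),
      (forall (A B : Obj C) (f g : Hom A B), SH S (f + g)%R = (SH S f + SH S g)%R),
      bijective (SO S)
    & (forall A B : Obj C, bijective (@SH C S A B))].

Definition castH (C : catData) (A A' B B' : Obj C) (e1 : A = A') (e2 : B = B')
  (f : Hom A B) : Hom A' B' :=
  match e1 in _ = X, e2 in _ = Y return Hom X Y with erefl, erefl => f end.

Definition dif (b : bool) (T : Type) (f : b = true -> T) (g : T) : T :=
  (if b as b' return (b = b' -> T) then fun h => f h else fun _ => g) (erefl b).

Section Sequences.
Variables (C : catData) (S : autData C) (n : nat).

(* An n-Sigma-sequence A_1 -> A_2 -> ... -> A_n -> Sigma A_1, indexed from 0: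
   objects sob 0, ..., sob (n-1); maps smor i : sob i -> sob (i+1) for i+1 < n
   (the values for larger i are irrelevant); last map slast : sob (n-1) -> Sigma (sob 0). *)
Record nSeq := NSeq {
  sob : nat -> Obj C;
  smor : forall i, Hom (sob i) (sob i.+1);
  slast : Hom (sob n.-1) (SO S (sob 0)) }.

Definition is_smorph (X Y : nSeq) (f : forall i, Hom (sob X i) (sob Y i)) : Prop :=
  (forall i, i.+1 < n -> comp (smor Y i) (f i) = comp (f i.+1) (smor X i)) /\
  comp (slast Y) (f n.-1) = comp (SH S (f 0)) (slast X).

Definition seq_iso (X Y : nSeq) : Prop :=
  exists f : forall i, Hom (sob X i) (sob Y i),
    is_smorph f /\ forall i, i < n -> isIso (f i).

(* matrices of morphisms between biproducts: [[a, b], [c, d]] *)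
Definition mx2 (X1 X2 Y1 Y2 : Obj C) (a : Hom X1 Y1) (b : Hom X2 Y1)
  (c : Hom X1 Y2) (d : Hom X2 Y2) : Hom (bip X1 X2) (bip Y1 Y2) :=
  (comp (bin1 Y1 Y2) (comp a (bpr1 X1 X2)) + comp (bin1 Y1 Y2) (comp b (bpr2 X1 X2))
  + comp (bin2 Y1 Y2) (comp c (bpr1 X1 X2)) + comp (bin2 Y1 Y2) (comp d (bpr2 X1 X2)))%R.

Definition sumsig (A B : Obj C) : Hom (bip (SO S A) (SO S B)) (SO S (bip A B)) :=
  (comp (SH S (bin1 A B)) (bpr1 (SO S A) (SO S B))
  + comp (SH S (bin2 A B)) (bpr2 (SO S A) (SO S B)))%R.

Definition dsum (X Y : nSeq) : nSeq :=
  @NSeq (fun i => bip (sob X i) (sob Y i))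
        (fun i => mx2 (smor X i) 0%R 0%R (smor Y i))
        (comp (sumsig (sob X 0) (sob Y 0)) (mx2 (slast X) 0%R 0%R (slast Y))).

Definition tob (A : Obj C) (i : nat) : Obj C :=
  match i with 0 | 1 => A | _ => zobj end.
Definition tmor (A : Obj C) (i : nat) : Hom (tob A i) (tob A i.+1) :=
  match i return Hom (tob A i) (tob A i.+1) with 0 => idm A | _ => 0%R end.
Definition trivseq (A : Obj C) : nSeq := @NSeq (tob A) (tmor A) 0%R.

(* left rotation A_2 -> ... -> A_n -> Sigma A_1 -> Sigma A_2 *)
Definition rob (X : nSeq) (i : nat) : Obj C :=
  if i < n.-1 then sob X i.+1 else SO S (sob X (i - n.-1)).

Lemma rob_lt (X : nSeq) i : i < n.-1 -> sob X i.+1 = rob X i.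
Proof. by move=> h; rewrite /rob h. Qed.

Lemma rob_last (X : nSeq) : SO S (sob X 0) = rob X n.-1.
Proof. by rewrite /rob ltnn subnn. Qed.

Lemma rob_e1 (X : nSeq) i : i.+1 == n.-1 -> sob X n.-1 = rob X i.
Proof. by move/eqP=> h; rewrite /rob -h ltnSn. Qed.

Lemma rob_e2 (X : nSeq) i : i.+1 == n.-1 -> SO S (sob X 0) = rob X i.+1.
Proof. by move/eqP=> h; rewrite /rob -h ltnn subnn. Qed.

Definition rmor (X : nSeq) (i : nat) : Hom (rob X i) (rob X i.+1) :=
  dif (fun h : i.+1 < n.-1 => castH (rob_lt X (ltnW h)) (rob_lt X h) (smor X i.+1))
      (dif (fun h : i.+1 == n.-1 => castH (rob_e1 X h) (rob_e2 X h) (slast X)) 0%R).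

(* Sigma alpha_1 : Sigma A_1 -> Sigma A_2, viewed as a map rob (n-1) -> Sigma (rob 0) *)
Definition rfirst (X : nSeq) : Hom (rob X n.-1) (SO S (rob X 0)) :=
  dif (fun h : 0 < n.-1 =>
         castH (rob_last X) (congr1 (SO S) (rob_lt X h)) (SH S (smor X 0))) 0%R.

Definition rotate (X : nSeq) : nSeq :=
  @NSeq (rob X) (rmor X) (if odd n then (- rfirst X)%R else rfirst X).

(* mapping cone of a morphism f : X -> Y:
   A_2(+)B_1 -> A_3(+)B_2 -> ... -> Sigma A_1 (+) B_n -> Sigma A_2 (+) Sigma B_1 *)
Section Cone.
Variables (X Y : nSeq) (f : forall i, Hom (sob X i) (sob Y i)).

Definition cob (i : nat) : Obj C := bip (rob X i) (sob Y i).

Definition cpsi (i : nat) : Hom (rob X i) (sob Y i.+1) :=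
  dif (fun h : i < n.-1 => castH (rob_lt X h) erefl (f i.+1)) 0%R.

Definition cmor (i : nat) : Hom (cob i) (cob i.+1) :=
  mx2 (- rmor X i)%R 0%R (cpsi i) (smor Y i).

Definition clast : Hom (cob n.-1) (SO S (cob 0)) :=
  comp (sumsig (rob X 0) (sob Y 0))
       (mx2 (- rfirst X)%R 0%R (castH (rob_last X) erefl (SH S (f 0))) (slast Y)).

Definition cone : nSeq := @NSeq cob cmor clast.
End Cone.

Definition n_angulated (N : nSeq -> Prop) : Prop :=
  (forall X Y, N X -> N Y -> N (dsum X Y)) /\
  (forall X Y, N (dsum X Y) -> N X /\ N Y) /\
  (forall X Y, seq_iso X Y -> N X -> N Y) /\
  (forall A, N (trivseq A)) /\
  (forall (A B : Obj C) (g : Hom A B), exists X, N X /\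
      exists (e0 : sob X 0 = A) (e1 : sob X 1 = B), castH e0 e1 (smor X 0) = g) /\
  (forall X, N X <-> N (rotate X)) /\
  (forall X Y, N X -> N Y ->
     forall (f0 : Hom (sob X 0) (sob Y 0)) (f1 : Hom (sob X 1) (sob Y 1)),
     comp (smor Y 0) f0 = comp f1 (smor X 0) ->
     exists f : forall i, Hom (sob X i) (sob Y i), [/\ f 0 = f0, f 1 = f1 & is_smorph f]) /\
  (forall X Y, N X -> N Y ->
     forall (f0 : Hom (sob X 0) (sob Y 0)) (f1 : Hom (sob X 1) (sob Y 1)),
     comp (smor Y 0) f0 = comp f1 (smor X 0) ->
     exists f : forall i, Hom (sob X i) (sob Y i),
       [/\ f 0 = f0, f 1 = f1, is_smorph f & N (cone f)]).

(* An element of the free abelian group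
   F(C) on isomorphism classes is represented by a formal sum (list of
   (coefficient, object)); two formal sums are equal in F(C) iff they have the same
   coefficient on every isomorphism class (function fcoef). *)
Definition fsum := seq (int * Obj C).

Definition fcoef (s : fsum) (A : Obj C) : int :=
  \sum_(p <- s) (if `[< iso p.2 A >] then p.1 else 0)%R.

Definition chi (X : nSeq) : fsum := [seq (((-1) ^+ i)%R, sob X i) | i <- iota 0 n].

Definition inR (N : nSeq -> Prop) (s : fsum) : Prop :=
  exists (l : seq (int * {X : nSeq | N X})) (k : int),
    forall A : Obj C,
      fcoef s A = (\sum_(p <- l) p.1 * fcoef (chi (sval p.2)) A
                 + (if odd n then 0 else k * fcoef [:: (1%:Z, zobj)] A))%R.

Definition K0eq (N : nSeq -> Prop) (s t : fsum) : Prop :=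
  inR N (s ++ [seq ((- p.1)%R, p.2) | p <- t]).

Definition simrel (N : nSeq -> Prop) (A B : Obj C) : Prop :=
  exists (Cs : nat -> Obj C) (X Y : nSeq),
    [/\ N X, N Y, sob X 0 = bip A (Cs 0), sob Y 0 = bip B (Cs 0)
      & forall i, 0 < i < n -> sob X i = Cs i /\ sob Y i = Cs i].

End Sequences.

(* Two n-angles that agree from the second term on, with first terms [A (+) E] and
   [B (+) E], witness [A ~ B]; closure of n-angles under isomorphism, direct sums and
   rotation makes this usable with objects given up to isomorphism.  Rotating trivial
   n-angles gives the n-angles [0, .., 0, E, E, 0, .., 0] in every position, hence constant
   segments of even length, from which the group laws follow ([n] odd is what makes
   [{A} + {SA} = 0]).  Comparing an n-angle [X_1, .., X_n] plus the even segments of [X_j]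
   ending just before position [j] with the even segments of [X_j] ending at [j] shows
   that the alternating sum of the [{X_i}] vanishes in the group of classes, so
   [[A] |-> {A}] is well defined on [K_0] and inverts [{A} |-> [A]]. *)

From HB Require Import structures.
From mathcomp Require Import all_boot all_algebra boolp zify.
Import GRing.Theory.
Set Implicit Arguments. Unset Strict Implicit. Unset Printing Implicit Defensive.
Local Open Scope ring_scope.

Section AdditiveCategory.
Variable C : addCat.
Implicit Types A B D E : Obj C.

Lemma compA A B D E (h : Hom D E) (g : Hom B D) (f : Hom A B) :
  comp h (comp g f) = comp (comp h g) f.
Proof. by case: (cax C) => [[]]. Qed.
Lemma comp1f A B (f : Hom A B) : comp (idm B) f = f.
Proof. by case: (cax C) => [[_ H]] _ _; case: (H _ _ f). Qed.
Lemma compf1 A B (f : Hom A B) : comp f (idm A) = f.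
Proof. by case: (cax C) => [[_ H]] _ _; case: (H _ _ f). Qed.
Lemma compDl A B D (g1 g2 : Hom B D) (f : Hom A B) :
  comp (g1 + g2) f = comp g1 f + comp g2 f.
Proof. by case: (cax C) => [[]]. Qed.
Lemma compDr A B D (g : Hom B D) (f1 f2 : Hom A B) :
  comp g (f1 + f2) = comp g f1 + comp g f2.
Proof. by case: (cax C) => [[]]. Qed.
Lemma hom_to0 A (f : Hom A zobj) : f = 0.
Proof. by case: (cax C) => [[_ _ _ _ H]] _; case: (H A). Qed.
Lemma hom_from0 A (f : Hom zobj A) : f = 0.
Proof. by case: (cax C) => [[_ _ _ _ H]] _; case: (H A). Qed.

Lemma comp0f A B D (f : Hom A B) : comp (0 : Hom B D) f = 0.
Proof. by apply/(addrI (comp 0 f)); rewrite -compDl !addr0. Qed.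
Lemma compf0 A B D (g : Hom B D) : comp g (0 : Hom A B) = 0.
Proof. by apply/(addrI (comp g 0)); rewrite -compDr !addr0. Qed.

Lemma bpr1_bin1 A B : comp (bpr1 A B) (bin1 A B) = idm A.
Proof. by case: (cax C) => _ H; case: (H A B). Qed.
Lemma bpr2_bin2 A B : comp (bpr2 A B) (bin2 A B) = idm B.
Proof. by case: (cax C) => _ H; case: (H A B). Qed.
Lemma bpr1_bin2 A B : comp (bpr1 A B) (bin2 A B) = 0.
Proof. by case: (cax C) => _ H; case: (H A B). Qed.
Lemma bpr2_bin1 A B : comp (bpr2 A B) (bin1 A B) = 0.
Proof. by case: (cax C) => _ H; case: (H A B). Qed.
Lemma bin_bpr_sum A B :
  comp (bin1 A B) (bpr1 A B) + comp (bin2 A B) (bpr2 A B) = idm (bip A B).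
Proof. by case: (cax C) => _ H; case: (H A B). Qed.

Lemma bpr1_bin1_comp A B D (f : Hom D A) : comp (bpr1 A B) (comp (bin1 A B) f) = f.
Proof. by rewrite compA bpr1_bin1 comp1f. Qed.
Lemma bpr2_bin2_comp A B D (f : Hom D B) : comp (bpr2 A B) (comp (bin2 A B) f) = f.
Proof. by rewrite compA bpr2_bin2 comp1f. Qed.
Lemma bpr1_bin2_comp A B D (f : Hom D B) : comp (bpr1 A B) (comp (bin2 A B) f) = 0.
Proof. by rewrite compA bpr1_bin2 comp0f. Qed.
Lemma bpr2_bin1_comp A B D (f : Hom D A) : comp (bpr2 A B) (comp (bin1 A B) f) = 0.
Proof. by rewrite compA bpr2_bin1 comp0f. Qed.

Definition compE := (comp0f, compf0, comp1f, compf1,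
  bpr1_bin1, bpr2_bin2, bpr1_bin2, bpr2_bin1,
  bpr1_bin1_comp, bpr2_bin2_comp, bpr1_bin2_comp, bpr2_bin1_comp, addr0, add0r).

Lemma bip_homP_r A B D (f g : Hom D (bip A B)) :
  comp (bpr1 A B) f = comp (bpr1 A B) g -> comp (bpr2 A B) f = comp (bpr2 A B) g -> f = g.
Proof.
by move=> h1 h2; rewrite -(comp1f f) -(comp1f g) -bin_bpr_sum !compDl -!compA h1 h2.
Qed.
Lemma bip_homP_l A B D (f g : Hom (bip A B) D) :
  comp f (bin1 A B) = comp g (bin1 A B) -> comp f (bin2 A B) = comp g (bin2 A B) -> f = g.
Proof.
by move=> h1 h2; rewrite -(compf1 f) -(compf1 g) -bin_bpr_sum !compDr !compA h1 h2.
Qed.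

Section Matrix.
Variables (X1 X2 Y1 Y2 : Obj C).
Variables (a : Hom X1 Y1) (b : Hom X2 Y1) (c : Hom X1 Y2) (d : Hom X2 Y2).

Lemma bpr1_mx2 : comp (bpr1 Y1 Y2) (mx2 a b c d) = comp a (bpr1 X1 X2) + comp b (bpr2 X1 X2).
Proof. by rewrite /mx2 !compDr !compE. Qed.
Lemma bpr2_mx2 : comp (bpr2 Y1 Y2) (mx2 a b c d) = comp c (bpr1 X1 X2) + comp d (bpr2 X1 X2).
Proof. by rewrite /mx2 !compDr !compE. Qed.
Lemma mx2_bin1 : comp (mx2 a b c d) (bin1 X1 X2) = comp (bin1 Y1 Y2) a + comp (bin2 Y1 Y2) c.
Proof. by rewrite /mx2 !compDl -!compA !compE. Qed.
Lemma mx2_bin2 : comp (mx2 a b c d) (bin2 X1 X2) = comp (bin1 Y1 Y2) b + comp (bin2 Y1 Y2) d.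
Proof. by rewrite /mx2 !compDl -!compA !compE. Qed.
End Matrix.

Lemma mx2_comp (X1 X2 Y1 Y2 Z1 Z2 : Obj C)
  (a : Hom X1 Y1) (b : Hom X2 Y1) (c : Hom X1 Y2) (d : Hom X2 Y2)
  (a' : Hom Y1 Z1) (b' : Hom Y2 Z1) (c' : Hom Y1 Z2) (d' : Hom Y2 Z2) :
  comp (mx2 a' b' c' d') (mx2 a b c d) =
  mx2 (comp a' a + comp b' c) (comp a' b + comp b' d)
      (comp c' a + comp d' c) (comp c' b + comp d' d).
Proof.
apply: bip_homP_r; apply: bip_homP_l;
by rewrite !compA ?bpr1_mx2 ?bpr2_mx2 -!compA ?mx2_bin1 ?mx2_bin2
  !compDl !compDr -!compA !compE.
Qed.

Lemma mx2_id A B : mx2 (idm A) 0 0 (idm B) = idm (bip A B).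
Proof. by rewrite /mx2 !compE bin_bpr_sum. Qed.

Lemma iso_refl A : iso A A.
Proof. by exists (idm A), (idm A); rewrite comp1f. Qed.
Lemma iso_sym A B : iso A B -> iso B A.
Proof. by case=> f [g [h1 h2]]; exists g, f. Qed.
Lemma iso_trans A B D : iso A B -> iso B D -> iso A D.
Proof.
case=> f [g [gf fg]] [f' [g' [gf' fg']]]; exists (comp f' f), (comp g g'); split.
  by rewrite -compA (compA g') gf' comp1f.
by rewrite -compA (compA f) fg comp1f.
Qed.

Lemma iso_bip A A' B B' : iso A A' -> iso B B' -> iso (bip A B) (bip A' B').
Proof.
case=> f [g [gf fg]] [f' [g' [gf' fg']]].
exists (mx2 f 0 0 f'), (mx2 g 0 0 g').
by split; rewrite mx2_comp !compE ?gf ?fg ?gf' ?fg' mx2_id.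
Qed.

Lemma iso_bipC A B : iso (bip A B) (bip B A).
Proof.
exists (mx2 0 (idm B) (idm A) 0), (mx2 0 (idm A) (idm B) 0).
by split; rewrite mx2_comp !compE mx2_id.
Qed.

Lemma iso_bipA A B D : iso (bip A (bip B D)) (bip (bip A B) D).
Proof.
exists (mx2 (bin1 A B) (comp (bin2 A B) (bpr1 B D)) 0 (bpr2 B D)).
exists (mx2 (bpr1 A B) 0 (comp (bin1 B D) (bpr2 A B)) (bin2 B D)).
by split; rewrite mx2_comp !compE -?compA !compE bin_bpr_sum mx2_id.
Qed.

Lemma iso_bipACA A B D E : iso (bip (bip A B) (bip D E)) (bip (bip A D) (bip B E)).
Proof.
apply: iso_trans (iso_sym (iso_bipA _ _ _)) _.
apply: iso_trans (iso_bipA _ _ _); apply: iso_bip; first exact: iso_refl.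
apply: iso_trans (iso_bipA _ _ _) _; apply: iso_trans _ (iso_sym (iso_bipA _ _ _)).
by apply: iso_bip; [apply: iso_bipC | apply: iso_refl].
Qed.

Lemma iso_bip0 A : iso (bip A zobj) A.
Proof.
exists (bpr1 A zobj), (bin1 A zobj); split; last by rewrite bpr1_bin1.
by rewrite -bin_bpr_sum (hom_to0 (bpr2 A zobj)) compf0 addr0.
Qed.

Lemma iso_0bip A : iso (bip zobj A) A.
Proof. exact: iso_trans (iso_bipC _ _) (iso_bip0 _). Qed.

Lemma iso_bip_if (b1 b2 : bool) E : ~~ (b1 && b2) ->
  iso (bip (if b1 then E else zobj) (if b2 then E else zobj))
      (if b1 || b2 then E else zobj).
Proof. by case: b1; case: b2 => //= _; [exact: iso_bip0 | exact: iso_0bip | exact: iso_bip0]. Qed.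

Lemma iso_zobj A : idm A = 0 -> iso zobj A.
Proof.
move=> A0; exists 0, 0; split; first by rewrite (hom_from0 (comp _ _)) (hom_from0 (idm _)).
by rewrite comp0f A0.
Qed.

End AdditiveCategory.

Lemma sum_signr_nat a b : (a <= b)%N ->
  \sum_(a <= i < b) ((-1) ^+ i : int) = (odd b)%:R - (odd a)%:R.
Proof.
have from0 m : \sum_(0 <= i < m) ((-1) ^+ i : int) = (odd m)%:R.
  elim: m => [|m IH]; first by rewrite big_geq.
  by rewrite big_nat_recr //= IH -signr_odd; case: (odd m); rewrite ?expr0 ?expr1 ?subrr.
move=> le_ab; rewrite -(from0 b) (big_cat_nat (leq0n a) le_ab) /= from0.
by rewrite addrAC subrr add0r.
Qed.

Section FormalSums.
Variable C : addCat.
Implicit Types (A D : Obj C) (s t : fsum C).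

Definition iso_delta A D : int := if `[< iso A D >] then 1 else 0.

Lemma iso_deltaE A D (c : int) : (if `[< iso A D >] then c else 0) = iso_delta A D * c.
Proof. by rewrite /iso_delta; case: asboolP; rewrite ?mul1r ?mul0r. Qed.

Lemma fcoef_cons p s D : fcoef (p :: s) D = iso_delta p.2 D * p.1 + fcoef s D.
Proof. by rewrite /fcoef big_cons iso_deltaE. Qed.

Lemma fcoef_cat s t D : fcoef (s ++ t) D = fcoef s D + fcoef t D.
Proof. by rewrite /fcoef big_cat. Qed.

Lemma fcoef_scale (c : int) s D : fcoef [seq (c * p.1, p.2) | p <- s] D = c * fcoef s D.
Proof.
by rewrite /fcoef big_map mulr_sumr; apply: eq_bigr => p _ /=; case: ifP; rewrite ?mulr0.
Qed.

Lemma fcoef_opp s D : fcoef [seq (- p.1, p.2) | p <- s] D = - fcoef s D.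
Proof.
by rewrite /fcoef big_map -sumrN; apply: eq_bigr => p _ /=; case: ifP; rewrite ?oppr0.
Qed.

Lemma fcoef_drop_iso s A D :
  fcoef [seq p <- s | ~~ `[< iso p.2 A >]] D = if `[< iso A D >] then 0 else fcoef s D.
Proof.
rewrite /fcoef big_filter; case: (asboolP (iso A D)) => [AD | nAD].
  rewrite big1 // => p /asboolP pA; case: asboolP => // pD.
  by case: pA; apply: iso_trans pD (iso_sym AD).
rewrite [RHS](bigID (fun p => `[< iso p.2 A >])) /= [X in _ = X + _]big1 ?add0r // => p /asboolP pA.
by case: asboolP => // pD; case: nAD; apply: iso_trans (iso_sym pA) pD.
Qed.

Variables (G : zmodType) (g : Obj C -> G).
Hypothesis g_iso : forall A B, iso A B -> g A = g B.

Definition fsum_eval s := \sum_(p <- s) g p.2 *~ p.1.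

Lemma fsum_eval_cat s t : fsum_eval (s ++ t) = fsum_eval s + fsum_eval t.
Proof. by rewrite /fsum_eval big_cat. Qed.

Lemma fsum_eval_opp s : fsum_eval [seq (- p.1, p.2) | p <- s] = - fsum_eval s.
Proof. by rewrite /fsum_eval big_map -sumrN; apply: eq_bigr => p _; rewrite mulrNz. Qed.

Lemma fsum_eval_iso_part s A :
  \sum_(p <- s | `[< iso p.2 A >]) g p.2 *~ p.1 = g A *~ fcoef s A.
Proof.
rewrite (eq_bigr (fun p => g A *~ p.1)) => [|p /asboolP /g_iso -> //].
by rewrite -mulrz_sumr big_mkcond.
Qed.

(* Induction on the length: the terms isomorphic to the head object contribute
   [g A *~ fcoef s A = 0], and dropping them leaves a shorter sum with zero coefficients. *)
Lemma fsum_eval0 s : (forall D, fcoef s D = 0) -> fsum_eval s = 0.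
Proof.
have [k] := ubnP (size s); elim: k s => // k IH [|[c A] s] /= lt_sk s0.
  by rewrite /fsum_eval big_nil.
rewrite /fsum_eval (bigID (fun p => `[< iso p.2 A >])) /= fsum_eval_iso_part s0 mulr0z add0r.
rewrite -big_filter; apply: IH => [|D].
  by rewrite size_filter /= asboolT ?(leq_ltn_trans (count_size _ _)) //; apply: iso_refl.
by rewrite fcoef_drop_iso s0; case: ifP.
Qed.

Lemma fsum_eval_eq s t : (forall D, fcoef s D = fcoef t D) -> fsum_eval s = fsum_eval t.
Proof.
move=> st; apply/eqP; rewrite -subr_eq0 -fsum_eval_opp -fsum_eval_cat; apply/eqP/fsum_eval0 => D.
by rewrite fcoef_cat fcoef_opp st subrr.
Qed.

End FormalSums.

Section Automorphism.
Variables (C : addCat) (S : autData C).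
Hypothesis HS : is_auto S.
Implicit Types A B D : Obj C.

Lemma SH_comp A B D (g : Hom B D) (f : Hom A B) : SH S (comp g f) = comp (SH S g) (SH S f).
Proof. by case: HS. Qed.
Lemma SH_id A : SH S (idm A) = idm (SO S A).
Proof. by case: HS. Qed.
Lemma SH0 A B : SH S (0 : Hom A B) = 0.
Proof. by case: HS => _ _ SHD _ _; apply/(addrI (SH S 0)); rewrite -SHD !addr0. Qed.
Lemma SO_surj D : exists A, SO S A = D.
Proof. by case: HS => _ _ _ [g _ gK] _; exists (g D). Qed.

Lemma iso_SO A B : iso A B -> iso (SO S A) (SO S B).
Proof. by case=> f [g [gf fg]]; exists (SH S f), (SH S g); rewrite -!SH_comp gf fg !SH_id. Qed.
Lemma iso_zobj_SO : iso zobj (SO S zobj).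
Proof. by apply: iso_zobj; rewrite -SH_id (hom_to0 (idm _)) SH0. Qed.

End Automorphism.

Section NAngulated.
Variables (C : addCat) (S : autData C) (n : nat) (N : nSeq S n -> Prop).
Hypotheses (HS : is_auto S) (HN : n_angulated N) (n_ge3 : (3 <= n)%N).
Implicit Types (A B D E : Obj C) (P Q : nat -> Obj C).

Lemma N_dsum X Y : N X -> N Y -> N (dsum X Y).
Proof. by move: HN; rewrite /n_angulated => -[dsumP _]; apply: dsumP. Qed.
Lemma N_iso X Y : seq_iso X Y -> N X -> N Y.
Proof. by move: HN; rewrite /n_angulated => -[_ [_ [isoP _]]]; apply: isoP. Qed.
Lemma N_triv A : N (trivseq S n A).
Proof. by move: HN; rewrite /n_angulated => -[_ [_ [_ [trivP _]]]]. Qed.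
Lemma N_rotate X : N X -> N (rotate X).
Proof. by move: HN; rewrite /n_angulated => -[_ [_ [_ [_ [_ [rotP _]]]]]] /rotP. Qed.

Definition angle_seq P :=
  exists X : nSeq S n, N X /\ forall i, (i < n)%N -> iso (sob X i) (P i).

(* Transport the maps of an n-angle along termwise isomorphisms onto the objects [P i]. *)
Lemma angle_seqP P : angle_seq P -> exists Y : nSeq S n, N Y /\ sob Y = P.
Proof.
case=> X [NX XP].
have isos i : exists p : Hom (sob X i) (P i) * Hom (P i) (sob X i),
    (i < n)%N -> comp p.2 p.1 = idm _ /\ comp p.1 p.2 = idm _.
  case: (ltnP i n) => [lt_in | _]; last by exists (0, 0).
  by case: (XP i lt_in) => f [g [gf fg]]; exists (f, g).
pose to i := (projT1 (cid (isos i))).1.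
pose from i := (projT1 (cid (isos i))).2.
have from_to i : (i < n)%N -> comp (from i) (to i) = idm _ /\ comp (to i) (from i) = idm _.
  exact: (projT2 (cid (isos i))).
pose Y := @NSeq _ S n P (fun i => comp (to i.+1) (comp (smor X i) (from i)))
   (comp (SH S (to 0%N)) (comp (slast X) (from n.-1))).
exists Y; split => //; apply: (N_iso (X := X)) => //.
exists to; split=> [|i lt_in]; last by exists (from i); apply: from_to.
split=> [i lt_i1n|]; rewrite /Y /= -!compA (proj1 (from_to _ _)) ?compf1 //; lia.
Qed.

Lemma angle_seq_iso P Q :
  angle_seq P -> (forall i, (i < n)%N -> iso (P i) (Q i)) -> angle_seq Q.
Proof.
case=> X [NX XP] PQ; exists X; split=> // i lt_in.
exact: iso_trans (XP i lt_in) (PQ i lt_in).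
Qed.

Lemma angle_seq_dsum P Q : angle_seq P -> angle_seq Q -> angle_seq (fun i => bip (P i) (Q i)).
Proof.
case=> X [NX XP] [Y [NY YQ]]; exists (dsum X Y); split; first exact: N_dsum.
by move=> i lt_in; apply: iso_bip; [apply: XP | apply: YQ].
Qed.

Definition rotate_objs P i := if (i < n.-1)%N then P i.+1 else SO S (P 0%N).

Lemma angle_seq_rotate P : angle_seq P -> angle_seq (rotate_objs P).
Proof.
case=> X [NX XP]; exists (rotate X); split; first exact: N_rotate.
move=> i lt_in; rewrite /= /rob /rotate_objs.
case: ifP => [lt_in1 | ge_in1]; first by apply: XP; lia.
have -> : (i - n.-1 = 0)%N by lia.
by apply: (iso_SO HS); apply: XP; lia.
Qed.

Lemma angle_seq_triv A : angle_seq (tob A).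
Proof. by exists (trivseq S n A); split=> [|i _]; [apply: N_triv | apply: iso_refl]. Qed.

Lemma angle_seq_zero : angle_seq (fun _ => zobj).
Proof. by apply: angle_seq_iso (angle_seq_triv zobj) _ => -[|[|i]] _; apply: iso_refl. Qed.

Definition pair_objs (q : nat) E i := if (i == q) || (i == q.+1) then E else zobj.
Definition wrap_objs E i := if i == 0%N then E else if i == n.-1 then SO S E else zobj.

Lemma angle_seq_pair0 E : angle_seq (pair_objs 0 E).
Proof. by apply: angle_seq_iso (angle_seq_triv E) _ => -[|[|i]] _; apply: iso_refl. Qed.

Lemma angle_seq_wrap E : angle_seq (wrap_objs E).
Proof.
apply: angle_seq_iso (angle_seq_rotate (angle_seq_pair0 E)) _ => i lt_in.
rewrite /rotate_objs /pair_objs /wrap_objs /=.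
case: ifP => lt_in1; last by rewrite ifF ?ifT; [apply: iso_refl | lia | lia].
case: (eqVneq i 0%N) => [->|nz_i]; first exact: iso_refl.
by rewrite ifF ?ifF; [apply: iso_refl | lia | lia].
Qed.

Lemma angle_seq_pair_last E : angle_seq (pair_objs n.-2 (SO S E)).
Proof.
apply: angle_seq_iso (angle_seq_rotate (angle_seq_wrap E)) _ => i lt_in.
rewrite /rotate_objs /pair_objs /wrap_objs /=.
case: ifP => lt_in1; last by rewrite ifT; [apply: iso_refl | lia].
have -> : ((i == n.-2) || (i == n.-2.+1)) = (i.+1 == n.-1) by lia.
exact: iso_refl.
Qed.

Lemma angle_seq_pair_pred q E : (0 < q <= n.-2)%N ->
  angle_seq (pair_objs q E) -> angle_seq (pair_objs q.-1 E).
Proof.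
move=> q_bd Aq; apply: angle_seq_iso (angle_seq_rotate Aq) _ => i lt_in.
rewrite /rotate_objs /pair_objs /=; case: ifP => lt_in1.
  have -> : ((i.+1 == q) || (i.+1 == q.+1)) = ((i == q.-1) || (i == q.-1.+1)) by lia.
  exact: iso_refl.
by rewrite ifF ?ifF; [apply/iso_sym/(iso_zobj_SO HS) | lia | lia].
Qed.

Lemma angle_seq_pair q E : (q <= n.-2)%N -> angle_seq (pair_objs q E).
Proof.
move=> le_qn; have [E' <-] := SO_surj HS E.
have down k : (k <= n.-2)%N -> angle_seq (pair_objs (n.-2 - k) (SO S E')).
  elim: k => [|k IH] le_kn; first by rewrite subn0; apply: angle_seq_pair_last.
  have -> : (n.-2 - k.+1 = (n.-2 - k).-1)%N by lia.
  by apply: angle_seq_pair_pred; [lia | apply: IH; lia].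
by have := down (n.-2 - q)%N; rewrite subKn //; apply; lia.
Qed.

Definition seg_objs E a b i := if (a <= i < b)%N then E else zobj.

Lemma angle_seq_seg E a b : (a <= b <= n)%N -> ~~ odd (b - a) -> angle_seq (seg_objs E a b).
Proof.
move=> le_abn even_ba; have [k bE] : exists k, b = (a + 2 * k)%N.
  by exists (b - a)./2; rewrite mul2n even_halfK //; lia.
subst b.
elim: k le_abn {even_ba} => [|k IH] le_abn.
  by apply: angle_seq_iso angle_seq_zero _ => i _; rewrite /seg_objs ifF; [apply: iso_refl | lia].
apply: angle_seq_iso (angle_seq_dsum (IH _) (angle_seq_pair (q := (a + 2 * k)%N) E _)) _; try lia.
move=> i _; rewrite /seg_objs /pair_objs.
have -> : (a <= i < a + 2 * k.+1)%N =
          (a <= i < a + 2 * k)%N || ((i == a + 2 * k) || (i == (a + 2 * k).+1))%N by lia.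
by apply: iso_bip_if; lia.
Qed.


Hypothesis n_odd : odd n.
Local Notation sim := (simrel N).

Lemma simrel_of_angle_seqs P Q A B E :
  angle_seq P -> angle_seq Q -> (forall i, (0 < i < n)%N -> iso (P i) (Q i)) ->
  iso (P 0%N) (bip A E) -> iso (Q 0%N) (bip B E) -> sim A B.
Proof.
move=> AP AQ PQ P0 Q0; pose Cs i := if i == 0%N then E else P i.
have /angle_seqP [X [NX XE]] : angle_seq (fun i => if i == 0%N then bip A E else Cs i).
  by apply: angle_seq_iso AP _ => -[|i] _ //=; apply: iso_refl.
have /angle_seqP [Y [NY YE]] : angle_seq (fun i => if i == 0%N then bip B E else Cs i).
  by apply: angle_seq_iso AQ _ => -[|i] lt_in //=; apply/iso_sym/PQ.
by exists Cs, X, Y; rewrite XE YE; split=> // -[|i].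
Qed.

Lemma angle_seqs_of_simrel A B : sim A B -> exists Cs : nat -> Obj C,
  angle_seq (fun i => if i == 0%N then bip A (Cs 0%N) else Cs i) /\
  angle_seq (fun i => if i == 0%N then bip B (Cs 0%N) else Cs i).
Proof.
case=> Cs [X [Y [NX NY X0 Y0 XY]]]; exists Cs.
by split; [exists X | exists Y]; split=> // -[|i] lt_in /=;
  rewrite ?X0 ?Y0 ?(proj1 (XY _ _)) ?(proj2 (XY _ _)) //; apply: iso_refl.
Qed.

Lemma simrel_refl A : sim A A.
Proof.
apply: (simrel_of_angle_seqs (E := zobj) (angle_seq_triv A) (angle_seq_triv A)).
- by move=> i _; apply: iso_refl.
- exact: iso_sym (iso_bip0 _).
- exact: iso_sym (iso_bip0 _).
Qed.

Lemma simrel_sym A B : sim A B -> sim B A.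
Proof. by case=> Cs [X [Y [NX NY X0 Y0 XY]]]; exists Cs, Y, X; split=> // i /XY[]. Qed.

Lemma simrel_trans A B D : sim A B -> sim B D -> sim A D.
Proof.
move=> /angle_seqs_of_simrel [Cs [AA AB]] /angle_seqs_of_simrel [Cs' [BB BD]].
apply: (simrel_of_angle_seqs (angle_seq_dsum AA BB) (angle_seq_dsum AB BD)
          (E := bip B (bip (Cs 0%N) (Cs' 0%N)))) => /=.
- move=> i lt_in; have -> : (i == 0%N) = false by lia.
  exact: iso_refl.
- exact: iso_trans (iso_bipACA _ _ _ _) (iso_sym (iso_bipA _ _ _)).
- apply: iso_trans (iso_bipACA _ _ _ _) (iso_trans _ (iso_sym (iso_bipA _ _ _))).
  by apply: iso_bip; [apply: iso_bipC | apply: iso_refl].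
Qed.

Lemma simrel_bip A A' B B' : sim A A' -> sim B B' -> sim (bip A B) (bip A' B').
Proof.
move=> /angle_seqs_of_simrel [Cs [AA AA']] /angle_seqs_of_simrel [Cs' [BB BB']].
apply: (simrel_of_angle_seqs (angle_seq_dsum AA BB) (angle_seq_dsum AA' BB')
          (E := bip (Cs 0%N) (Cs' 0%N))) => /=; try exact: iso_bipACA.
move=> i lt_in; have -> : (i == 0%N) = false by lia.
exact: iso_refl.
Qed.

Lemma simrel_iso A B : iso A B -> sim A B.
Proof.
move=> AB; apply: (simrel_of_angle_seqs (E := zobj) (angle_seq_triv A) (angle_seq_triv A)).
- by move=> i _; apply: iso_refl.
- exact: iso_sym (iso_bip0 _).
- exact: iso_trans (iso_sym (iso_bip0 A)) (iso_bip AB (iso_refl _)).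
Qed.

(* [A, 0, ..., 0, SA] plus [SA, ..., SA, 0] is [A + SA, SA, ..., SA], which has the same
   tail as [0, SA, ..., SA]; both segments have even length n - 1. *)
Lemma simrel_bip_SO A : sim (bip A (SO S A)) zobj.
Proof.
apply: (simrel_of_angle_seqs (E := zobj)
  (angle_seq_dsum (angle_seq_wrap A) (angle_seq_seg (SO S A) (a := 0) (b := n.-1) _ _))
  (angle_seq_seg (SO S A) (a := 1) (b := n) _ _)); rewrite /wrap_objs /seg_objs /=; try lia.
- move=> i i_bd; have -> : (i == 0%N) = false by lia.
  have -> : (1 <= i < n)%N by lia.
  case: (eqVneq i n.-1) => [->|ne_in1]; first by rewrite ltnn; apply: iso_bip0.
  by rewrite ifT; [apply: iso_0bip | lia].
- by rewrite ifT; [apply: iso_sym (iso_bip0 _) | lia].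
- exact: iso_sym (iso_bip0 _).
Qed.

Lemma simrel_SO A B : sim A B -> sim (SO S A) (SO S B).
Proof.
move=> AB; apply: simrel_trans (simrel_iso (iso_sym (iso_bip0 _))) _.
apply: simrel_trans (simrel_bip (simrel_refl _) (simrel_sym (simrel_bip_SO B))) _.
apply: simrel_trans (simrel_iso (iso_bipA _ _ _)) _.
apply: simrel_trans (simrel_bip (simrel_bip (simrel_refl _) (simrel_sym AB)) (simrel_refl _)) _.
apply: simrel_trans (simrel_iso (iso_0bip (SO S B))).
apply: simrel_bip (simrel_refl _).
exact: simrel_trans (simrel_iso (iso_bipC _ _)) (simrel_bip_SO _).
Qed.

Definition sim_classes := {P : Obj C -> Prop | exists A, P = sim A}.
HB.instance Definition _ := gen_eqMixin sim_classes.
HB.instance Definition _ := gen_choiceMixin sim_classes.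

Definition sim_class A : sim_classes := exist _ (sim A) (ex_intro _ A erefl).
Definition class_rep (x : sim_classes) : Obj C := projT1 (cid (proj2_sig x)).

Lemma sim_classes_inj (x y : sim_classes) : sval x = sval y -> x = y.
Proof. exact: (eq_sig_hprop (fun _ => @Prop_irrelevance _) x y). Qed.

Lemma sim_class_rep x : sim_class (class_rep x) = x.
Proof. by apply: sim_classes_inj; rewrite /class_rep; case: (cid _) => A /= ->. Qed.

Lemma sim_class_eq A B : sim_class A = sim_class B <-> sim A B.
Proof.
split=> [/(congr1 sval) /= clsAB | AB]; first by rewrite clsAB; apply: simrel_refl.
apply: sim_classes_inj; apply: funext => D /=; apply: propext.
by split=> [AD | BD]; [apply: simrel_trans (simrel_sym AB) AD | apply: simrel_trans AB BD].
Qed.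

Lemma sim_class_ind (Pr : sim_classes -> Prop) : (forall A, Pr (sim_class A)) -> forall x, Pr x.
Proof. by move=> Pr_cls x; rewrite -(sim_class_rep x). Qed.

Lemma sim_rep_class A : sim (class_rep (sim_class A)) A.
Proof. by apply/sim_class_eq; rewrite sim_class_rep. Qed.

Definition sim_class_add x y := sim_class (bip (class_rep x) (class_rep y)).
Definition sim_class_opp x := sim_class (SO S (class_rep x)).

Lemma sim_class_addE A B : sim_class_add (sim_class A) (sim_class B) = sim_class (bip A B).
Proof. by apply/sim_class_eq; apply: simrel_bip; apply: sim_rep_class. Qed.
Lemma sim_class_oppE A : sim_class_opp (sim_class A) = sim_class (SO S A).
Proof. by apply/sim_class_eq; apply: simrel_SO; apply: sim_rep_class. Qed.

Lemma sim_class_addA : associative sim_class_add.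
Proof.
elim/sim_class_ind => A; elim/sim_class_ind => B; elim/sim_class_ind => D.
by rewrite !sim_class_addE; apply/sim_class_eq/simrel_iso/iso_bipA.
Qed.
Lemma sim_class_addC : commutative sim_class_add.
Proof.
elim/sim_class_ind => A; elim/sim_class_ind => B.
by rewrite !sim_class_addE; apply/sim_class_eq/simrel_iso/iso_bipC.
Qed.
Lemma sim_class_add0 : left_id (sim_class zobj) sim_class_add.
Proof.
elim/sim_class_ind => A.
by rewrite sim_class_addE; apply/sim_class_eq/simrel_iso/iso_0bip.
Qed.
Lemma sim_class_addN : left_inverse (sim_class zobj) sim_class_opp sim_class_add.
Proof.
elim/sim_class_ind => A; rewrite sim_class_oppE sim_class_addE; apply/sim_class_eq.
exact: simrel_trans (simrel_iso (iso_bipC _ _)) (simrel_bip_SO _).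
Qed.

HB.instance Definition _ := GRing.isZmodule.Build sim_classes
  sim_class_addA sim_class_addC sim_class_add0 sim_class_addN.

Lemma sim_classD A B : sim_class (bip A B) = sim_class A + sim_class B.
Proof. by rewrite -sim_class_addE. Qed.
Lemma sim_class_iso A B : iso A B -> sim_class A = sim_class B.
Proof. by move=> AB; apply/sim_class_eq/simrel_iso. Qed.

Fixpoint bigbip (f : nat -> Obj C) m := if m is m'.+1 then bip (bigbip f m') (f m') else zobj.

Lemma sim_class_bigbip f m : sim_class (bigbip f m) = \sum_(0 <= j < m) sim_class (f j).
Proof. by elim: m => [|m IH]; [rewrite big_geq | rewrite big_nat_recr //= sim_classD IH]. Qed.

Lemma angle_seq_bigbip (F : nat -> nat -> Obj C) m :
  (forall j, (j < m)%N -> angle_seq (F j)) -> angle_seq (fun i => bigbip (F^~ i) m).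
Proof.
elim: m => [|m IH] AF /=; first exact: angle_seq_zero.
apply: (angle_seq_dsum (P := fun i => bigbip (F^~ i) m)).
  by apply: IH => j lt_jm; apply: AF; lia.
by apply: AF; lia.
Qed.

Lemma iso_bigbip f g m : (forall j, (j < m)%N -> iso (f j) (g j)) -> iso (bigbip f m) (bigbip g m).
Proof.
elim: m => [|m IH] fg /=; first exact: iso_refl.
by apply: iso_bip; [apply: IH => j lt_jm | ]; apply: fg; lia.
Qed.

Lemma iso_bigbipD f g m :
  iso (bigbip (fun j => bip (f j) (g j)) m) (bip (bigbip f m) (bigbip g m)).
Proof.
elim: m => [|m IH] /=; first exact: iso_sym (iso_bip0 _).
exact: iso_trans (iso_bip IH (iso_refl _)) (iso_bipACA _ _ _ _).
Qed.

Lemma iso_bigbip_delta f i m : (i < m)%N ->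
  iso (bigbip (fun j => if j == i then f j else zobj) m) (f i).
Proof.
elim: m => [|m IH] lt_im //=; case: (eqVneq m i) => [<- | ne_mi]; last first.
  by apply: iso_trans (iso_bip (IH _) (iso_refl _)) (iso_bip0 _); lia.
apply: iso_trans (iso_bip (_ : iso _ zobj) (iso_refl _)) (iso_0bip _).
apply: iso_trans (iso_bigbip (g := fun _ => zobj) _) _ => [j lt_jm | ].
  by rewrite ifF; [apply: iso_refl | lia].
by elim: m {IH lt_im} => [|m IH] /=; [apply: iso_refl | apply: iso_trans (iso_bip0 _) IH].
Qed.

Definition even_tail P j := seg_objs (P j) (odd j) j.
Definition odd_tail P j := seg_objs (P j) (~~ odd j) j.+1.

(* At position 0 the segments [even_tail P j] (resp. [odd_tail P j]) pick out the [P j] with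
   [j > 0] even (resp. [j] odd); at a position [i > 0] they differ by exactly [P i]. *)
Lemma simrel_even_odd_tails P : angle_seq P ->
  sim (bip (P 0%N) (bigbip (fun j => even_tail P j 0%N) n)) (bigbip (fun j => odd_tail P j 0%N) n).
Proof.
move=> AP; apply: (simrel_of_angle_seqs (E := zobj)
  (angle_seq_dsum AP (angle_seq_bigbip (F := even_tail P) _))
  (angle_seq_bigbip (F := odd_tail P) _)); try exact: iso_sym (iso_bip0 _).
- by move=> j lt_jn; apply: angle_seq_seg; rewrite ?oddB ?oddb ?addbb //; lia.
- by move=> j lt_jn; apply: angle_seq_seg; rewrite ?oddB /= ?oddb ?addbb //; lia.
- move=> i i_bd; have lt_in : (i < n)%N by lia.
  apply: iso_trans (iso_bip (iso_sym (iso_bigbip_delta P lt_in)) (iso_refl _)) _.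
  apply: iso_trans (iso_sym (iso_bigbipD _ _ _)) (iso_bigbip _) => j _.
  rewrite /odd_tail /even_tail /seg_objs.
  have -> : (~~ odd j <= i < j.+1)%N = (j == i) || (odd j <= i < j)%N by case: (odd j) => /=; lia.
  by apply: iso_bip_if; case: (odd j) => /=; lia.
Qed.

Lemma sim_class_alternating_sum P : angle_seq P ->
  \sum_(0 <= i < n) sim_class (P i) *~ (-1) ^+ i = 0.
Proof.
move=> /simrel_even_odd_tails /sim_class_eq; rewrite sim_classD !sim_class_bigbip => tails.
rewrite big_ltn; last lia.
suff -> : \sum_(1 <= i < n) sim_class (P i) *~ (-1) ^+ i =
  \sum_(0 <= j < n) sim_class (even_tail P j 0%N) - \sum_(0 <= j < n) sim_class (odd_tail P j 0%N).
  by rewrite expr0 mulr1z addrA tails subrr.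
rewrite -sumrB [RHS]big_ltn /even_tail /odd_tail /seg_objs /=; last lia.
rewrite subrr add0r; apply: eq_big_nat => i i_bd; rewrite -signr_odd.
have -> : (0 < i)%N by lia.
by case: (odd i); rewrite /= ?expr0 ?expr1 ?mulr1z ?mulrN1z ?subr0 ?sub0r.
Qed.
Definition chi_span (phi : Obj C -> int) := exists l : seq (int * {X : nSeq S n | N X}),
  forall D, phi D = \sum_(p <- l) p.1 * fcoef (chi (sval p.2)) D.

Lemma inR_chi_span s : inR N s <-> chi_span (fcoef s).
Proof.
rewrite /inR /chi_span n_odd.
by split=> [[l [_ sl]] | [l sl]]; exists l; [| exists 0] => D; rewrite sl addr0.
Qed.

Lemma chi_span_ext phi psi : chi_span phi -> (forall D, phi D = psi D) -> chi_span psi.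
Proof. by move=> [l phil] phipsi; exists l => D; rewrite -phipsi phil. Qed.
Lemma chi_spanD phi psi : chi_span phi -> chi_span psi -> chi_span (fun D => phi D + psi D).
Proof. by move=> [l phil] [l' psil]; exists (l ++ l') => D; rewrite big_cat phil psil. Qed.
Lemma chi_spanZ (c : int) phi : chi_span phi -> chi_span (fun D => c * phi D).
Proof.
move=> [l phil]; exists [seq (c * p.1, p.2) | p <- l] => D.
by rewrite big_map phil mulr_sumr; apply: eq_bigr => p _ /=; rewrite mulrA.
Qed.
Lemma chi_spanN phi : chi_span phi -> chi_span (fun D => - phi D).
Proof. by move/(chi_spanZ (-1)) /chi_span_ext; apply=> D; rewrite mulN1r. Qed.

Definition chi_coef P D := \sum_(0 <= i < n) iso_delta (P i) D * (-1) ^+ i.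

Lemma chi_span_angle_seq P : angle_seq P -> chi_span (chi_coef P).
Proof.
move=> /angle_seqP [Y [NY <-]]; exists [:: (1, exist _ Y NY)] => D.
rewrite big_seq1 /= mul1r /fcoef /chi big_map /chi_coef /index_iota subn0.
by apply: eq_bigr => i _; rewrite iso_deltaE.
Qed.

Lemma chi_span_zobj : chi_span (iso_delta zobj).
Proof.
apply: (chi_span_ext (chi_span_angle_seq angle_seq_zero)) => D.
by rewrite /chi_coef -mulr_sumr sum_signr_nat // n_odd subr0 mulr1.
Qed.

Lemma chi_span_bip A B :
  chi_span (fun D => iso_delta (bip A B) D - iso_delta A D - iso_delta B D).
Proof.
pose P i := if i == 0%N then A else if i == 1%N then bip A B else if i == 2%N then B else zobj.
have AP : angle_seq P.
  apply: angle_seq_iso (angle_seq_dsum (angle_seq_triv A) (angle_seq_pair (q := 1) B _)) _.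
    by lia.
  move=> [|[|[|i]]] _; rewrite /pair_objs /P /=.
  - exact: iso_bip0.
  - exact: iso_refl.
  - exact: iso_0bip.
  - exact: iso_bip0.
apply: (chi_span_ext (chi_spanN (chi_span_angle_seq AP))) => D.
rewrite /chi_coef big_ltn; last lia.
rewrite big_ltn; last lia.
rewrite big_ltn; last lia.
rewrite (eq_big_nat _ _ (F2 := fun i => iso_delta zobj D * (-1) ^+ i)); last first.
  by move=> i i_bd; rewrite /P !ifF //; lia.
by rewrite -mulr_sumr sum_signr_nat // n_odd subrr mulr0 addr0 /P /= expr0 expr1 expr2; lia.
Qed.

Lemma chi_span_SO A : chi_span (fun D => iso_delta A D + iso_delta (SO S A) D).
Proof.
apply: (chi_span_ext (chi_spanD (chi_span_angle_seq (angle_seq_wrap A)) chi_span_zobj)) => D.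
have odd_n1 : odd n.-1 = false by apply/negbTE; rewrite -oddS prednK ?n_odd //; lia.
rewrite /chi_coef big_ltn; last lia.
rewrite -(prednK (_ : 0 < n)%N); last lia.
rewrite big_nat_recr /=; last lia.
rewrite (eq_big_nat _ _ (F2 := fun i => iso_delta zobj D * (-1) ^+ i)); last first.
  by move=> i i_bd; rewrite /wrap_objs ifF ?ifF //; lia.
rewrite -mulr_sumr sum_signr_nat; last lia.
rewrite /wrap_objs /=.
have -> : (n.-1 == 0%N) = false by lia.
by rewrite eqxx -[(-1) ^+ n.-1]signr_odd odd_n1 expr0 sub0r !mulr1 mulrN1; lia.
Qed.

Lemma chi_coef_head A Cs D :
  chi_coef (fun i => if i == 0%N then A else Cs i) D =
  iso_delta A D + \sum_(1 <= i < n) iso_delta (Cs i) D * (-1) ^+ i.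
Proof.
rewrite /chi_coef big_ltn /= ?expr0 ?mulr1; last lia.
by congr (_ + _); apply: eq_big_nat => i i_bd; rewrite ifF //; lia.
Qed.

Lemma chi_span_simrel A B : sim A B -> chi_span (fun D => iso_delta A D - iso_delta B D).
Proof.
move=> /angle_seqs_of_simrel [Cs [AA BB]].
move: (chi_spanD (chi_spanD (chi_span_angle_seq AA) (chi_spanN (chi_span_angle_seq BB)))
   (chi_spanD (chi_spanN (chi_span_bip A (Cs 0%N))) (chi_span_bip B (Cs 0%N)))).
by move/chi_span_ext; apply=> D; rewrite !chi_coef_head; lia.
Qed.

Lemma K0eq_chi_span s t : K0eq N s t <-> chi_span (fun D => fcoef s D - fcoef t D).
Proof.
rewrite /K0eq inR_chi_span.
by split=> /chi_span_ext; apply=> D; rewrite fcoef_cat fcoef_opp.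
Qed.

Definition chi_combination (l : seq (int * {X : nSeq S n | N X})) : fsum C :=
  flatten [seq [seq (p.1 * q.1, q.2) | q <- chi (sval p.2)] | p <- l].

Lemma fcoef_chi_combination l D :
  fcoef (chi_combination l) D = \sum_(p <- l) p.1 * fcoef (chi (sval p.2)) D.
Proof.
elim: l => [|p l IH]; first by rewrite /fcoef !big_nil.
by rewrite /chi_combination /= fcoef_cat fcoef_scale -/(chi_combination l) IH big_cons.
Qed.

Lemma sim_class_chi_combination l : fsum_eval sim_class (chi_combination l) = 0.
Proof.
elim: l => [|p l IH]; first by rewrite /fsum_eval big_nil.
rewrite /chi_combination /= fsum_eval_cat -/(chi_combination l) IH addr0 /fsum_eval big_map.
under eq_bigr => q _ do rewrite /= mulrC mulrzA.
have angle_p : angle_seq (sob (sval p.2)).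
  by exists (sval p.2); split=> [|i _]; [apply: (svalP p.2) | apply: iso_refl].
move: (sim_class_alternating_sum angle_p); rewrite /index_iota subn0 => alt_sum.
by rewrite -mulrz_suml /chi big_map /= alt_sum mul0rz.
Qed.

Lemma simrel_of_chi_span A B : chi_span (fun D => iso_delta A D - iso_delta B D) -> sim A B.
Proof.
move=> [l ABl]; apply/sim_class_eq/eqP; rewrite -subr_eq0.
have := fsum_eval_eq sim_class_iso (s := [:: (1, A); (-1, B)]) (t := chi_combination l).
rewrite sim_class_chi_combination /fsum_eval !big_cons big_nil /= mulr1z mulrN1z addr0.
by move=> -> // D; rewrite fcoef_chi_combination -ABl !fcoef_cons /fcoef big_nil mulr1 mulrN1 addr0.
Qed.

Lemma chi_span_natmul (k : nat) X :
  exists Y, chi_span (fun D => k%:Z * iso_delta X D - iso_delta Y D).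
Proof.
elim: k => [|k [Y kXY]].
  by exists zobj; apply: (chi_span_ext (chi_spanN chi_span_zobj)) => D; rewrite mul0r add0r.
exists (bip Y X); apply: (chi_span_ext (chi_spanD kXY (chi_spanN (chi_span_bip Y X)))) => D.
lia.
Qed.

(* Negative multiples use [-<X> = <S X>] modulo [R(C)]. *)
Lemma chi_span_intmul (c : int) X : exists Y, chi_span (fun D => c * iso_delta X D - iso_delta Y D).
Proof.
case: c => k; first exact: chi_span_natmul.
have [Y kXY] := chi_span_natmul k.+1 (SO S X); exists Y.
apply: (chi_span_ext (chi_spanD kXY (chi_spanN (chi_spanZ k.+1%:Z (chi_span_SO X))))) => D.
rewrite NegzE; lia.
Qed.

Lemma chi_span_fcoef s : exists A, chi_span (fun D => fcoef s D - iso_delta A D).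
Proof.
elim: s => [|[c X] s [A sA]].
  exists zobj; apply: (chi_span_ext (chi_spanN chi_span_zobj)) => D.
  by rewrite /fcoef big_nil add0r.
have [Y cXY] := chi_span_intmul c X.
exists (bip Y A).
apply: (chi_span_ext (chi_spanD (chi_spanD cXY sA) (chi_spanN (chi_span_bip Y A)))).
by move=> D; rewrite fcoef_cons /=; lia.
Qed.

Lemma simrel_K0eq A B : sim A B <-> K0eq N [:: (1%:Z, A)] [:: (1%:Z, B)].
Proof.
have fcoef1 X D : fcoef [:: (1%:Z, X)] D = iso_delta X D.
  by rewrite fcoef_cons /fcoef big_nil mulr1 addr0.
rewrite K0eq_chi_span; split=> [/chi_span_simrel AB | AB].
  by apply: (chi_span_ext AB) => D; rewrite !fcoef1.
by apply: simrel_of_chi_span; apply: (chi_span_ext AB) => D; rewrite !fcoef1.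
Qed.

Lemma K0eq_bip A B : K0eq N [:: (1%:Z, bip A B)] [:: (1%:Z, A); (1%:Z, B)].
Proof.
apply/K0eq_chi_span; apply: (chi_span_ext (chi_span_bip A B)) => D.
by rewrite !fcoef_cons /fcoef big_nil !mulr1 !addr0 opprD addrA.
Qed.

Lemma K0eq_surj s : exists A, K0eq N s [:: (1%:Z, A)].
Proof.
have [A sA] := chi_span_fcoef s; exists A; apply/K0eq_chi_span.
by apply: (chi_span_ext sA) => D; rewrite fcoef_cons /fcoef big_nil mulr1 addr0.
Qed.
End NAngulated.

Theorem proposition2p3 (C : addCat) (S : autData C) (n : nat)
  (N : nSeq S n -> Prop) :
  is_auto S -> n_angulated N -> (3 <= n)%N -> odd n ->
  [/\ (forall A : Obj C, simrel N A A),
      (forall A B : Obj C, simrel N A B -> simrel N B A)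
    & (forall A B D : Obj C, simrel N A B -> simrel N B D -> simrel N A D)] /\
  [/\ (forall A A' B B' : Obj C, simrel N A A' -> simrel N B B' ->
          simrel N (bip A B) (bip A' B')),
      (forall A B D : Obj C, simrel N (bip A (bip B D)) (bip (bip A B) D)),
      (forall A B : Obj C, simrel N (bip A B) (bip B A)),
      (forall A : Obj C, simrel N (bip A zobj) A)
    & (forall A : Obj C, simrel N (bip A (SO S A)) zobj)] /\
  [/\ (forall A B : Obj C, simrel N A B <-> K0eq N [:: (1%:Z, A)] [:: (1%:Z, B)]),
      (forall A B : Obj C,
          K0eq N [:: (1%:Z, bip A B)] [:: (1%:Z, A); (1%:Z, B)])
    & (forall s : fsum C, exists A : Obj C, K0eq N s [:: (1%:Z, A)])].
Proof.
move=> HS HN n_ge3 n_odd; have simiso := simrel_iso HN n_ge3.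
split; last split; [split | split | split].
- exact: simrel_refl.
- exact: simrel_sym.
- exact: simrel_trans.
- exact: simrel_bip.
- by move=> A B D; apply/simiso/iso_bipA.
- by move=> A B; apply/simiso/iso_bipC.
- by move=> A; apply/simiso/iso_bip0.
- exact: simrel_bip_SO.
- exact: simrel_K0eq.
- exact: K0eq_bip.
- exact: K0eq_surj.
Qed.
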